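(* Let $\Gamma$ be a graph of minimum degree $\delta>0$ and maximum degree $\Delta$, and let $k$ be an integer. (a) If $0<\tau\le\min\{\frac{k+\delta}{2\delta},\frac{k+\Delta}{2\Delta}\}$, then every global offensive $k$-alliance in $\Gamma$ is a $\tau$-dominating set. (b) If $\max\{\frac{k+\delta}{2\delta},\frac{k+\Delta}{2\Delta}\}\le\tau\le 1$, then every $\tau$-dominating set in $\Gamma$ is a global offensive $k$-alliance.
   Context: Graphs are finite and simple. For $S\subseteq V$ and $v\in V$, $\delta(v)$ is the degree of $v$, $\delta_S(v)$ the number of neighbours of $v$ in $S$, $\overline{S}=V\setminus S$, and $\partial(S)$ the set of vertices of $\overline{S}$ with a neighbour in $S$. A nonempty $S\subseteq V$ is an offensive $k$-alliance if $\delta_S(v)\ge\delta_{\overline{S}}(v)+k$ for all $v\in\partial(S)$, and a global offensive $k$-alliance if moreover it is dominating (every vertex of $\overline{S}$ has a neighbour in $S$). For $\tau\in(0,1]$, a set $S\subseteq V$ is $\tau$-dominating if $\delta_S(v)\ge\tau\,\delta(v)$ for every $v\in\overline{S}$. *)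

From mathcomp Require Import all_boot all_order all_algebra.
Set Implicit Arguments. Unset Strict Implicit. Unset Printing Implicit Defensive.
Import Order.TTheory GRing.Theory Num.Theory.

Definition simple_graph (T : finType) (e : rel T) : Prop :=
  symmetric e /\ irreflexive e.

Section Alliances.
Variables (T : finType) (e : rel T).

Definition deg_in (S : {set T}) (v : T) : nat := #|[set u in S | e v u]|.
Definition deg (v : T) : nat := #|[set u | e v u]|.
Definition boundary (S : {set T}) : {set T} :=
  [set v in ~: S | [exists u in S, e v u]].

Definition min_degree (d : nat) : Prop :=
  (exists v, deg v = d) /\ forall v, d <= deg v.
Definition max_degree (d : nat) : Prop :=
  (exists v, deg v = d) /\ forall v, deg v <= d.

Definition offensive_alliance (k : int) (S : {set T}) : Prop :=
  S != set0 /\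
  forall v, v \in boundary S ->
    ((deg_in S v)%:Z >= (deg_in (~: S) v)%:Z + k)%R.

Definition dominating (S : {set T}) : Prop :=
  forall v, v \in ~: S -> exists2 u, u \in S & e v u.

Definition global_offensive_alliance (k : int) (S : {set T}) : Prop :=
  offensive_alliance k S /\ dominating S.

Definition tau_dominating (R : realFieldType) (tau : R) (S : {set T}) : Prop :=
  forall v, v \in ~: S -> (tau * (deg v)%:R <= (deg_in S v)%:R)%R.

End Alliances.

(* A vertex v outside S of degree d with a neighbours in S satisfies the
   alliance inequality iff a >= (k + d)/2, and is tau-dominated iff a >= tau d.
   So both implications reduce to comparing tau with r(d) = (k + d)/(2d).  As
   r(d) = 1/2 + k/(2d) is monotone in d, for every degree d in [dmin, dmax] the
   value r(d) lies between r(dmin) and r(dmax). *)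
From mathcomp Require Import all_boot all_order all_algebra.
From mathcomp Require Import lra.
Set Implicit Arguments. Unset Strict Implicit. Unset Printing Implicit Defensive.
Import Order.TTheory GRing.Theory Num.Theory.
Local Open Scope ring_scope.

Section AllianceRatio.
Variable R : realFieldType.

Definition alliance_ratio (k d : R) : R := (k + d) / (2 * d).

Lemma le_alliance_ratio (tau k d : R) :
  0 < d -> (tau <= alliance_ratio k d) = (2 * tau * d <= k + d).
Proof. by move=> d_gt0; rewrite ler_pdivlMr ?mulr_gt0 // mulrCA mulrA. Qed.

Lemma alliance_ratio_le (tau k d : R) :
  0 < d -> (alliance_ratio k d <= tau) = (k + d <= 2 * tau * d).
Proof. by move=> d_gt0; rewrite ler_pdivrMr ?mulr_gt0 // mulrCA mulrA. Qed.

Lemma alliance_ratio_monotone (k x y : R) : 0 < x -> x <= y ->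
  (0 <= k -> alliance_ratio k y <= alliance_ratio k x) /\
  (k <= 0 -> alliance_ratio k x <= alliance_ratio k y).
Proof.
move=> x_gt0 le_xy; have y_gt0 : 0 < y by apply: lt_le_trans le_xy.
rewrite /alliance_ratio; split=> [k_ge0 | k_le0].
- rewrite ler_pdivrMr ?mulr_gt0 // mulrAC ler_pdivlMr ?mulr_gt0 //.
  have : k * x <= k * y by rewrite ler_wpM2l.
  lra.
- rewrite ler_pdivrMr ?mulr_gt0 // mulrAC ler_pdivlMr ?mulr_gt0 //.
  have : k * y <= k * x by rewrite ler_wnM2l.
  lra.
Qed.

Lemma alliance_ratio_between (k a d b : R) : 0 < a -> a <= d -> d <= b ->
  Num.min (alliance_ratio k a) (alliance_ratio k b) <= alliance_ratio k d <=
  Num.max (alliance_ratio k a) (alliance_ratio k b).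
Proof.
move=> a_gt0 le_ad le_db; have d_gt0 : 0 < d by apply: lt_le_trans le_ad.
have [decr_ad incr_ad] := alliance_ratio_monotone k a_gt0 le_ad.
have [decr_db incr_db] := alliance_ratio_monotone k d_gt0 le_db.
rewrite ge_min le_max; have [k_ge0 | /ltW k_le0] := lerP 0 k.
- by rewrite decr_db ?decr_ad ?orbT.
- by rewrite incr_ad ?incr_db ?orbT.
Qed.

End AllianceRatio.

Section Vertices.
Variables (T : finType) (e : rel T).

Lemma deg_in_split (S : {set T}) (v : T) :
  deg e v = (deg_in e S v + deg_in e (~: S) v)%N.
Proof.
rewrite /deg /deg_in -(cardsID S [set u | e v u]).
by congr addn; apply: eq_card => u; rewrite !inE andbC.
Qed.

Lemma offensive_vertexE (R : realFieldType) (k : int) (S : {set T}) (v : T) :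
  ((deg_in e (~: S) v)%:Z + k <= (deg_in e S v)%:Z) =
  (k%:~R + (deg e v)%:R <= 2 * (deg_in e S v)%:R :> R).
Proof. by rewrite -(ler_int R) rmorphD /= (deg_in_split S v) natrD; apply/idP/idP; lra. Qed.

Lemma dominating_boundary (S : {set T}) (v : T) :
  dominating e S -> v \in ~: S -> v \in boundary e S.
Proof.
move=> S_dom vS; have [u uS evu] := S_dom v vS.
by rewrite inE vS; apply/existsP; exists u; rewrite uS.
Qed.

Lemma dominating_neq0 (S : {set T}) (v : T) : dominating e S -> S != set0.
Proof.
move=> S_dom; apply/set0Pn; have [vS | vSc] := boolP (v \in S); first by exists v.
by have [|u uS _] := S_dom v; [rewrite inE | exists u].
Qed.

Lemma tau_dominating_dominating (R : realFieldType) (tau : R) (S : {set T}) :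
  0 < tau -> (forall v, (0 < deg e v)%N) -> tau_dominating e tau S -> dominating e S.
Proof.
move=> tau_gt0 deg_gt0 S_dom v vS.
have : (0 < deg_in e S v)%N.
  rewrite -(ltr0n R); apply: lt_le_trans (S_dom v vS).
  by rewrite mulr_gt0 // ltr0n.
by rewrite card_gt0 => /set0Pn[u]; rewrite inE => /andP[uS evu]; exists u.
Qed.

End Vertices.

Theorem mainTheorem4 (R : realFieldType) (T : finType) (e : rel T)
  (dmin dmax : nat) (k : int) (tau : R) :
  simple_graph e ->
  min_degree e dmin -> (0 < dmin)%N -> max_degree e dmax ->
  ((0 < tau)%R ->
    (tau <= Num.min ((k%:~R + dmin%:R) / (2 * dmin%:R))
                    ((k%:~R + dmax%:R) / (2 * dmax%:R)))%R ->
    forall S : {set T}, global_offensive_alliance e k S -> tau_dominating e tau S)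
  /\
  ((0 < tau)%R ->
   (Num.max ((k%:~R + dmin%:R) / (2 * dmin%:R))
            ((k%:~R + dmax%:R) / (2 * dmax%:R)) <= tau)%R ->
    (tau <= 1)%R ->
    forall S : {set T}, tau_dominating e tau S -> global_offensive_alliance e k S).
Proof.
move=> _ [[v0 _] deg_ge] dmin_gt0 [_ deg_le].
have deg_gt0 v : (0 < deg e v)%N by apply: leq_trans (deg_ge v).
pose ratio (d : nat) := alliance_ratio (k%:~R : R) d%:R.
have ratio_between (v : T) :
    Num.min (ratio dmin) (ratio dmax) <= ratio (deg e v) <= Num.max (ratio dmin) (ratio dmax).
  by apply: alliance_ratio_between; rewrite ?ltr0n ?ler_nat.
have degR_gt0 v : (0 : R) < (deg e v)%:R by rewrite ltr0n.
split=> [tau_gt0 tau_le S [[_ S_off] S_dom] v vS | tau_gt0 tau_ge _ S S_tau].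
- have /andP[ratio_ge _] := ratio_between v.
  have := le_trans tau_le ratio_ge; rewrite le_alliance_ratio //.
  have := S_off v (dominating_boundary S_dom vS); rewrite (offensive_vertexE e R).
  lra.
- have S_dom := tau_dominating_dominating tau_gt0 deg_gt0 S_tau.
  split=> //; split=> [|v]; first exact: dominating_neq0 v0 S_dom.
  rewrite inE => /andP[vS _]; have /andP[_ ratio_le] := ratio_between v.
  have := le_trans ratio_le tau_ge; rewrite alliance_ratio_le // (offensive_vertexE e R).
  have := S_tau v vS; lra.
Qed.
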